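(* Let $q$ be an indeterminate, $k\ge1$, $n\ge2$, and work in $H_{kn}(q)$ over $\mathbb{C}(q)$. For $i\in\{1,\dots,n-1\}$ let $w_i\in\mathfrak S_{kn}$ be the involution exchanging the blocks $\{(i-1)k+1,\dots,ik\}$ and $\{ik+1,\dots,(i+1)k\}$ preserving order ($w_i(j)=j+k$ for $(i-1)k<j\le ik$, $w_i(j)=j-k$ for $ik<j\le(i+1)k$, $w_i(j)=j$ otherwise), and let $\Sigma_i=P_{k,n}\sigma_{w_i}P_{k,n}\in H^{fus}_{k,n}(q)=P_{k,n}H_{kn}(q)P_{k,n}$. Then $\sigma_{w_i}$ commutes with $P_{k,n}$, and in $H^{fus}_{k,n}(q)$ one has $\Sigma_i\Sigma_{i+1}\Sigma_i=\Sigma_{i+1}\Sigma_i\Sigma_{i+1}$ for $1\le i\le n-2$ and $\Sigma_i\Sigma_j=\Sigma_j\Sigma_i$ for $|i-j|>1$.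
   Context: $H_m(q)$ is the algebra generated by $\sigma_1,\dots,\sigma_{m-1}$ with relations $\sigma_i\sigma_{i+1}\sigma_i=\sigma_{i+1}\sigma_i\sigma_{i+1}$, $\sigma_i\sigma_j=\sigma_j\sigma_i$ for $|i-j|>1$, $\sigma_i^2=1+(q-q^{-1})\sigma_i$. For $w\in\mathfrak S_m$ with reduced expression $s_{a_1}\cdots s_{a_r}$, $\sigma_w=\sigma_{a_1}\cdots\sigma_{a_r}$ and $\ell(w)=r$. The $q$-symmetriser of $H_k(q)$ is $P_k=\frac{q^{-k(k-1)/2}}{[k]_q!}\sum_{w\in\mathfrak S_k}q^{\ell(w)}\sigma_w$, with $[L]_q=\frac{q^L-q^{-L}}{q-q^{-1}}$, $[L]_q!=[1]_q\cdots[L]_q$. $P_{k,n}\in H_{kn}(q)$ is the product over $b=0,\dots,n-1$ of the copies of $P_k$ in the generators $\sigma_{bk+1},\dots,\sigma_{bk+k-1}$. The fused Hecke algebra $H^{fus}_{k,n}(q)=P_{k,n}H_{kn}(q)P_{k,n}$ is an algebra with unit $P_{k,n}$. *)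

From HB Require Import structures.
From mathcomp Require Import all_boot all_order all_algebra all_fingroup.
From mathcomp Require Import reals.
From mathcomp.real_closed Require Import complex.
From mathcomp Require Import zify.

Set Implicit Arguments.
Unset Strict Implicit.
Unset Printing Implicit Defensive.

Import GRing.Theory.

Definition Cq (R : realType) : fieldType := {fraction {poly (complex R)}}.
Definition qq (R : realType) : Cq R := tofrac ('X : {poly (complex R)}).

Local Open Scope ring_scope.

Definition qint (K : fieldType) (q : K) (L : nat) : K :=
  (q ^+ L - q ^- L) / (q - q^-1).
Definition qfact (K : fieldType) (q : K) (L : nat) : K :=
  \prod_(1 <= j < L.+1) qint q j.

(* The simple transposition s_a of S_m (1-based: exchanges a and a+1,
   i.e. the 0-based points a-1 and a), for 1 <= a <= m-1; identity otherwise *)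
Definition stp (m a : nat) : {perm 'I_m} :=
  match m return {perm 'I_m} with
  | 0 => 1%g
  | m'.+1 => if ((0 < a) && (a < m'.+1))%N
             then tperm (inord a.-1 : 'I_m'.+1) (inord a) else 1%g
  end.

Definition word_perm (m : nat) (s : seq nat) : {perm 'I_m} :=
  (\prod_(a <- s) stp m a)%g.

(* letters of words are the indices 1..m-1, encoded by 'I_m.-1 via i |-> i+1 *)
Definition letter (m : nat) (i : 'I_m.-1) : nat := i.+1.

(* length l(w) = minimal length of an expression of w in the s_a *)
Definition ell (m : nat) (w : {perm 'I_m}) : nat :=
  find (fun r => [exists t : r.-tuple 'I_m.-1,
                    word_perm m (map (@letter m) t) == w])
       (iota 0 (m * m).+1).

(* sigma_w = sigma_{a_1} ... sigma_{a_r} for a reduced expression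
   w = s_{a_1} ... s_{a_r}, r = l(w); s a = sigma_a *)
Definition sigw (K : fieldType) (A : algType K) (s : nat -> A) (m : nat)
    (w : {perm 'I_m}) : A :=
  match [pick t : (ell w).-tuple 'I_m.-1 | word_perm m (map (@letter m) t) == w] with
  | Some t => \prod_(i <- t) s (@letter m i)
  | None => 0
  end.

Definition hecke_rel (K : fieldType) (q : K) (A : algType K) (m : nat)
    (s : nat -> A) : Prop :=
  [/\ (forall i, (1 <= i)%N -> (i.+1 <= m.-1)%N ->
         s i * s i.+1 * s i = s i.+1 * s i * s i.+1),
      (forall i j, (1 <= i <= m.-1)%N -> (1 <= j <= m.-1)%N ->
         (i.+1 < j)%N || (j.+1 < i)%N -> s i * s j = s j * s i)
    & (forall i, (1 <= i <= m.-1)%N -> s i * s i = 1 + (q - q^-1) *: s i)].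

Definition qsym (K : fieldType) (q : K) (A : algType K) (s : nat -> A)
    (k : nat) : A :=
  (q ^- (k * k.-1)./2 / qfact q k) *:
    \sum_(w : {perm 'I_k}) (q ^+ ell w) *: sigw s w.

(* P_{k,n}: product over b = 0..n-1 of the copies of P_k in the generators
   sigma_{bk+1}, ..., sigma_{bk+k-1} *)
Definition Pkn (K : fieldType) (q : K) (A : algType K) (s : nat -> A)
    (k n : nat) : A :=
  \prod_(b < n) qsym q (fun a => s (b * k + a)%N) k.

(* block exchange on 0-based points: w_i(j) = j + k for (i-1)k <= j < ik,
   w_i(j) = j - k for ik <= j < (i+1)k, w_i(j) = j otherwise *)
Definition blk (k i j : nat) : nat :=
  if ((i.-1 * k <= j) && (j < i * k))%N then (j + k)%N
  else if ((i * k <= j) && (j < i.+1 * k))%N then (j - k)%N else j.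

Definition wfun (m k i : nat) (j : 'I_m) : 'I_m :=
  if ((0 < i) && (i.+1 * k <= m))%N then insubd j (blk k i j) else j.

Lemma wfun_inj m k i : injective (@wfun m k i).
Proof.
move=> j1 j2; rewrite /wfun; case: ifP => // /andP [Hi Hm].
have Hr : forall j : 'I_m, (blk k i j < m)%N.
  move=> j; have := ltn_ord j; rewrite /blk.
  case: i Hi Hm => // i' _ Hm /=.
  by do ! case: ifP => /= ?; nia.
move/(congr1 val); rewrite !val_insubd !Hr => E; apply/val_inj => /=.
move: E; rewrite /blk; case: i Hi Hm Hr => // i' _ Hm _ /=.
by do ! case: ifP => /= ?; nia.
Qed.

Definition wblk (m k i : nat) : {perm 'I_m} := perm (@wfun_inj m k i).

From HB Require Import structures.
From mathcomp Require Import all_boot all_order all_algebra all_fingroup.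
From mathcomp Require Import reals.
From mathcomp.real_closed Require Import complex.
From mathcomp Require Import zify.

Set Implicit Arguments.
Unset Strict Implicit.
Unset Printing Implicit Defensive.

Import GRing.Theory.

(* By Matsumoto's theorem any two reduced words of a permutation w are linked
   by braid moves, so sigma_w is the product along any reduced word; hence
   sigma_(uv) = sigma_u sigma_v whenever l(uv) = l(u) + l(v), where l(w) is the
   number of inversions of w.  The block exchange w_i moves whole blocks without
   reordering them, so w_i s_(bk+a) = s_(b'k+a) w_i with lengths adding, where b'
   exchanges the block indices i-1 and i.  Thus sigma_(w_i) conjugates the b-th
   copy of P_k into the b'-th one, and since the two exchanged copies commute,
   sigma_(w_i) commutes with P_(k,n).  The w_i satisfy the braid relations in
   S_(kn) with all relevant lengths adding, so the sigma_(w_i) satisfy them in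
   H_(kn)(q); as Sigma_i = sigma_(w_i) P_(k,n)^2, the relations for the Sigma_i
   follow.  Only the braid relations of H_(kn)(q) are used, never the quadratic
   one. *)

Ltac case_ifs_lia := repeat match goal with
  | |- context [if ?b then _ else _] =>
      lazymatch b with context [if _ then _ else _] => fail | _ =>
        let h := fresh "h" in case: (boolP b) => h; simpl in h; try (exfalso; lia) end
  end; simpl in *; try lia.

Section Inversions.
Variable m : nat.

Lemma stpE (c : nat) (x : 'I_m) : (0 < c < m)%N ->
  val (stp m c x) = if val x == c.-1 then c else if val x == c then c.-1 else val x.
Proof.
case: m x => [[]//|m'] x /andP[c0 cm]; rewrite /stp c0 cm /=.
case: tpermP => [->|->|h1 h2]; rewrite ?inordK; try lia.
- by rewrite eqxx.
- by case: ifP => /eqP h //; rewrite eqxx.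
- have e1 : (val x == c.-1) = false.
    by apply/negP => /eqP e; apply: h1; apply/val_inj; rewrite /= inordK //; lia.
  have e2 : (val x == c) = false.
    by apply/negP => /eqP e; apply: h2; apply/val_inj; rewrite /= inordK //; lia.
  by rewrite e1 e2.
Qed.

Lemma stp_swap c (x y : 'I_m) : (0 < c < m)%N -> val x = c.-1 -> val y = c ->
  stp m c x = y /\ stp m c y = x.
Proof. by move=> hc hx hy; split; apply/val_inj; rewrite stpE //= hx hy; case_ifs_lia. Qed.

Lemma stpK c : (0 < c < m)%N -> (stp m c * stp m c = 1)%g.
Proof.
by move=> hc; apply/permP => x; apply/val_inj; rewrite permM perm1 !stpE //; case_ifs_lia.
Qed.

Lemma stp_comm a b : (0 < a < m)%N -> (0 < b < m)%N -> (a.+1 < b)%N || (b.+1 < a)%N ->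
  (stp m a * stp m b = stp m b * stp m a)%g.
Proof.
by move=> ha hb hab; apply/permP => x; apply/val_inj; rewrite !permM !stpE //; case_ifs_lia.
Qed.

Lemma stp_braid a : (0 < a)%N -> (a.+1 < m)%N ->
  (stp m a * stp m a.+1 * stp m a = stp m a.+1 * stp m a * stp m a.+1)%g.
Proof.
move=> h1 h2; apply/permP => x; apply/val_inj.
by rewrite !permM !stpE //; try lia; case_ifs_lia.
Qed.

Definition inversions (w : {perm 'I_m}) : nat :=
  \sum_(x : 'I_m) \sum_(y : 'I_m) ((x < y) && (w y < w x))%N.

Lemma sum_pairs_split (F : 'I_m -> 'I_m -> nat) :
  \sum_(x : 'I_m) \sum_(y : 'I_m) F x y =
  \sum_(x : 'I_m) \sum_(y : 'I_m) ((x < y) * (F x y + F y x))%N + \sum_(x : 'I_m) F x x.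
Proof.
have E x y : F x y = ((x < y) * F x y + (y < x) * F x y + (x == y) * F x y)%N.
  case: (x =P y) => [->|ne]; first by rewrite ltnn /= mul1n.
  rewrite /= mul0n addn0; case: (ltngtP x y) => h /=; rewrite ?mul1n ?mul0n ?addn0 //.
  by case: ne; apply/val_inj.
have D x : \sum_(y : 'I_m) ((x == y) * F x y)%N = F x x.
  rewrite (bigD1 x) //= eqxx mul1n big1 ?addn0 // => y.
  by rewrite eq_sym => /negbTE ->.
under eq_bigr => x _ do under eq_bigr => y _ do rewrite E.
under eq_bigr => x _ do rewrite !big_split /= D.
rewrite !big_split /=; congr (_ + _).
rewrite (exchange_big _ _ _ _ _ (fun (x y : 'I_m) => (y < x) * F x y)%N) /= -big_split /=.
by apply: eq_bigr => x _; rewrite -big_split /=; apply: eq_bigr => y _; rewrite mulnDr.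
Qed.

(* [(u * v) x = v (u x)]: the hypothesis says that [v] keeps every inversion of [u]. *)
Lemma inversions_mul (u v : {perm 'I_m}) :
  (forall x y : 'I_m, x < y -> u y < u x -> v (u y) < v (u x)) ->
  inversions (u * v)%g = (inversions u + inversions v)%N.
Proof.
move=> keep.
have -> : inversions v =
    \sum_(x : 'I_m) \sum_(y : 'I_m) ((u x < u y) && (v (u y) < v (u x)))%N.
  rewrite /inversions (reindex_inj (@perm_inj _ u)) /=; apply: eq_bigr => x _.
  by rewrite (reindex_inj (@perm_inj _ u)).
rewrite sum_pairs_split [X in (_ + (_ + X))%N]big1 ?addn0 => [|x _]; last by rewrite ltnn.
rewrite /inversions -big_split /=; apply: eq_bigr => x _; rewrite -big_split /=.
apply: eq_bigr => y _; rewrite !permM.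
case: (ltnP x y) => hxy /=; last by rewrite mul0n.
rewrite mul1n; case: (ltngtP (u x) (u y)) => h /=.
- by rewrite add0n addn0.
- by have kept := keep x y hxy h; rewrite kept add0n /= ltnNge ltnW.
- by move: h => /val_inj /perm_inj e; rewrite e ltnn in hxy.
Qed.

Lemma inversions1 : inversions 1%g = 0%N.
Proof.
by apply: big1 => x _; apply: big1 => y _; rewrite !perm1; case: ltnP => //= h; rewrite ltnNge ltnW.
Qed.

Lemma inversions_stp c : (0 < c < m)%N -> inversions (stp m c) = 1%N.
Proof.
move=> hc; have c1 : (c.-1 < m)%N by lia.
have c2 : (c < m)%N by lia.
have sum1 (F : 'I_m -> nat) (z : 'I_m) : (forall x, x != z -> F x = 0%N) ->
    \sum_(x : 'I_m) F x = F z.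
  by move=> h; rewrite (bigD1 z) //= big1 ?addn0 // => x /h.
rewrite /inversions; under eq_bigr => x _ do under eq_bigr => y _ do
  have -> : ((x < y) && (stp m c y < stp m c x))%N = (val x == c.-1) && (val y == c)
    by rewrite !stpE //; apply/idP/idP; case_ifs_lia.
rewrite (sum1 _ (Ordinal c1)) => [|x /eqP ne]; last first.
  by apply: big1 => y _; case: eqP => //= e; case: ne; apply: val_inj.
rewrite (sum1 _ (Ordinal c2)) /= ?eqxx // => y /eqP ne.
by case: eqP => [e|]; [case: ne; apply: val_inj | rewrite andbF].
Qed.

Lemma inversions_stp_mul_ascent c (u : {perm 'I_m}) (x0 y0 : 'I_m) : (0 < c < m)%N ->
  val x0 = c.-1 -> val y0 = c -> (u x0 < u y0)%N ->
  inversions (stp m c * u)%g = (inversions u).+1.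
Proof.
move=> hc hx hy hu; rewrite inversions_mul ?inversions_stp // => x y hxy hs.
have : ((x < y) && (stp m c y < stp m c x))%N by rewrite hxy hs.
rewrite !stpE // => h.
have -> : x = x0 by apply/val_inj; rewrite hx; move: h; case_ifs_lia.
have -> : y = y0 by apply/val_inj; rewrite hy; move: h; case_ifs_lia.
by case: (stp_swap hc hx hy) => -> ->.
Qed.

Lemma inversions_stp_mul_descent c (u : {perm 'I_m}) (x0 y0 : 'I_m) : (0 < c < m)%N ->
  val x0 = c.-1 -> val y0 = c -> (u y0 < u x0)%N ->
  inversions u = (inversions (stp m c * u)%g).+1.
Proof.
move=> hc hx hy hu.
have {1}-> : u = (stp m c * (stp m c * u))%g by rewrite mulgA stpK // mul1g.
rewrite (inversions_stp_mul_ascent hc hx hy) //.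
by rewrite !permM; case: (stp_swap hc hx hy) => -> ->.
Qed.

Lemma inversions_stp_mul_le c (u : {perm 'I_m}) : (0 < c < m)%N ->
  (inversions (stp m c * u)%g <= (inversions u).+1)%N.
Proof.
move=> hc; have c1 : (c.-1 < m)%N by lia.
have c2 : (c < m)%N by lia.
case: (ltngtP (u (Ordinal c1)) (u (Ordinal c2))) => h.
- by rewrite (inversions_stp_mul_ascent (x0 := Ordinal c1) (y0 := Ordinal c2)) //; lia.
- rewrite [X in (_ <= X.+1)%N](inversions_stp_mul_descent (c := c)
    (x0 := Ordinal c1) (y0 := Ordinal c2)) //; lia.
- by move/val_inj/perm_inj/(congr1 val): h => /=; lia.
Qed.

Definition descent (w : {perm 'I_m}) (c : nat) : Prop :=
  forall x0 y0 : 'I_m, val x0 = c.-1 -> val y0 = c -> (w y0 < w x0)%N.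

Lemma inversions_far_descent a b (w : {perm 'I_m}) : (0 < a)%N -> (a.+1 < b)%N -> (b < m)%N ->
  descent w b -> inversions (stp m a * w)%g = (inversions (stp m b * (stp m a * w)))%g.+1.
Proof.
move=> ha hab hbm db; have hb : (0 < b < m)%N by lia.
have q0 : (b.-1 < m)%N by lia.
have q1 : (b < m)%N by lia.
apply: (inversions_stp_mul_descent (x0 := Ordinal q0) (y0 := Ordinal q1)) => //.
have fix_a (x : 'I_m) : (b.-1 <= val x)%N -> stp m a x = x.
  by move=> hx; apply/val_inj; rewrite stpE //; case_ifs_lia.
by rewrite !permM !fix_a /=; try lia; apply: db.
Qed.

Lemma inversions_braid_descents a (w : {perm 'I_m}) : (0 < a)%N -> (a.+1 < m)%N ->
  descent w a -> descent w a.+1 ->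
  inversions (stp m a * w)%g = (inversions (stp m a * (stp m a.+1 * (stp m a * w))))%g.+2.
Proof.
move=> ha ham da db; have ha' : (0 < a < m)%N by lia.
have hb : (0 < a.+1 < m)%N by lia.
have p0 : (a.-1 < m)%N by lia.
have p1 : (a < m)%N by lia.
have p2 : (a.+1 < m)%N by lia.
have sa0 : stp m a (Ordinal p0) = Ordinal p1 by apply/val_inj; rewrite stpE //=; case_ifs_lia.
have sa1 : stp m a (Ordinal p1) = Ordinal p0 by apply/val_inj; rewrite stpE //=; case_ifs_lia.
have sa2 : stp m a (Ordinal p2) = Ordinal p2 by apply/val_inj; rewrite stpE //=; case_ifs_lia.
have sb0 : stp m a.+1 (Ordinal p0) = Ordinal p0 by apply/val_inj; rewrite stpE //=; case_ifs_lia.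
have sb1 : stp m a.+1 (Ordinal p1) = Ordinal p2 by apply/val_inj; rewrite stpE //=; case_ifs_lia.
have da' := da (Ordinal p0) (Ordinal p1) erefl erefl.
have db' := db (Ordinal p1) (Ordinal p2) erefl erefl.
rewrite (inversions_stp_mul_descent (c := a.+1) (u := (stp m a * w)%g)
  (x0 := Ordinal p1) (y0 := Ordinal p2)) //; last first.
  by rewrite !permM sa1 sa2; apply: ltn_trans da'.
rewrite (inversions_stp_mul_descent (c := a) (u := (stp m a.+1 * (stp m a * w))%g)
  (x0 := Ordinal p0) (y0 := Ordinal p1)) //.
by rewrite !permM sb0 sb1 sa0 sa2.
Qed.

Lemma perm_increasing_id (w : {perm 'I_m}) :
  (forall x y : 'I_m, val y = (val x).+1 -> (w x < w y)%N) -> w = 1%g.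
Proof.
move=> inc.
have up i (x : 'I_m) : val x = i -> (i <= w x)%N.
  elim: i x => [|i IH] x hx //.
  have hi : (i < m)%N by have := ltn_ord x; simpl in *; lia.
  by have := IH (Ordinal hi) erefl; have := inc (Ordinal hi) x hx; simpl in *; lia.
have down d (x : 'I_m) : (val x + d = m.-1)%N -> (w x + d <= m.-1)%N.
  elim: d x => [|d IH] x hx; first by have := ltn_ord (w x); lia.
  have hi : ((val x).+1 < m)%N by have := ltn_ord x; simpl in *; lia.
  have := IH (Ordinal hi) ltac:(simpl in *; lia).
  by have := inc x (Ordinal hi) erefl; simpl in *; lia.
apply/permP => x; apply/val_inj; rewrite perm1.
have := down (m.-1 - x) x ltac:(have := ltn_ord x; simpl in *; lia).
by have := up _ x erefl; simpl in *; lia.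
Qed.

Lemma descent_exists (w : {perm 'I_m}) : w != 1%g ->
  exists c (x0 y0 : 'I_m), [/\ (0 < c < m)%N, val x0 = c.-1, val y0 = c & (w y0 < w x0)%N].
Proof.
move=> ne.
case: (boolP [exists x : 'I_m, exists y : 'I_m, (val y == (val x).+1) && (w y < w x)%N]).
  move=> /existsP [x /existsP [y /andP [/eqP e h]]].
  exists (val y), x, y; split => //; last by rewrite e.
  by have := ltn_ord y; rewrite e; simpl in *; lia.
move=> /negP nex; case/negP: ne; apply/eqP/perm_increasing_id => x y e.
case: (ltngtP (w x) (w y)) => // h.
  by case: nex; apply/existsP; exists x; apply/existsP; exists y; rewrite e eqxx h.
by move/val_inj/perm_inj: h => exy; move: e; rewrite exy; simpl in *; lia.
Qed.

Lemma inversions_lt (w : {perm 'I_m}) : (inversions w < (m * m).+1)%N.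
Proof.
rewrite ltnS /inversions.
apply: (@leq_trans (\sum_(x : 'I_m) \sum_(y : 'I_m) 1%N)).
  by apply: leq_sum => x _; apply: leq_sum => y _; case: (_ && _).
by rewrite big_const_ord iter_addn_0 big_const_ord iter_addn_0 mul1n.
Qed.

End Inversions.

Section Words.
Variable m : nat.

Definition is_word (t : seq nat) : bool := all (fun a => (0 < a < m)%N) t.

Lemma word_perm_cons a t : word_perm m (a :: t) = (stp m a * word_perm m t)%g.
Proof. by rewrite /word_perm big_cons. Qed.

Lemma word_perm_cat t1 t2 : word_perm m (t1 ++ t2) = (word_perm m t1 * word_perm m t2)%g.
Proof. by rewrite /word_perm big_cat. Qed.

Lemma is_word_letters r (t : r.-tuple 'I_m.-1) : is_word (map (@letter m) t).
Proof. by apply/allP => a /mapP [i _ ->]; rewrite /letter; have := ltn_ord i; lia. Qed.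

Lemma inversions_word_perm_le t : is_word t -> (inversions (word_perm m t) <= size t)%N.
Proof.
elim: t => [|a t IH] /=; first by rewrite /word_perm big_nil inversions1.
move=> /andP [ha ht]; rewrite word_perm_cons.
by apply: leq_trans (inversions_stp_mul_le _ ha) _; rewrite ltnS IH.
Qed.

(* Peeling off descents one at a time writes [w] as a word of length [inversions w]. *)
Lemma word_of_inversions r (w : {perm 'I_m}) : inversions w = r ->
  exists t : r.-tuple 'I_m.-1, word_perm m (map (@letter m) t) = w.
Proof.
elim: r w => [|r IH] w hw.
  exists [tuple]; rewrite /word_perm big_nil.
  case: (eqVneq w 1%g) => [->//|ne]; case: (descent_exists ne) => c [x0 [y0 [hc hx hy hd]]].
  by have := inversions_stp_mul_descent hc hx hy hd; rewrite hw.
case: (eqVneq w 1%g) => [e|ne]; first by move: hw; rewrite e inversions1.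
case: (descent_exists ne) => c [x0 [y0 [hc hx hy hd]]].
have := inversions_stp_mul_descent hc hx hy hd; rewrite hw => -[/esym/IH [t ht]].
have hi : (c.-1 < m.-1)%N by lia.
exists (cons_tuple (Ordinal hi) t) => /=.
rewrite word_perm_cons ht /letter /= prednK; last by lia.
by rewrite mulgA stpK // mul1g.
Qed.

Lemma ell_inversions (w : {perm 'I_m}) : ell w = inversions w.
Proof.
set p := (fun r => [exists t : r.-tuple 'I_m.-1, word_perm m (map (@letter m) t) == w]).
have p_inv : p (inversions w).
  by case: (word_of_inversions (w := w) erefl) => t ht; apply/existsP; exists t; apply/eqP.
have p_ge r : p r -> (inversions w <= r)%N.
  move=> /existsP [t /eqP <-].
  by apply: leq_trans (inversions_word_perm_le (is_word_letters t)) _; rewrite size_map size_tuple.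
have has_p : has p (iota 0 (m * m).+1).
  by apply/hasP; exists (inversions w); rewrite ?mem_iota /= ?inversions_lt.
rewrite /ell -/p; apply/eqP; rewrite eqn_leq; apply/andP; split.
  case: ltnP => // h; have := before_find 0 h; rewrite nth_iota ?add0n ?p_inv //.
  by have := inversions_lt w; lia.
have := nth_find 0 has_p; rewrite nth_iota ?add0n; first exact: p_ge.
by move: has_p; rewrite has_find size_iota.
Qed.

Definition reduced (t : seq nat) : bool :=
  is_word t && (size t == inversions (word_perm m t)).

Lemma reduced_size t : reduced t -> size t = inversions (word_perm m t).
Proof. by case/andP=> _ /eqP. Qed.

Lemma reduced_cat t1 t2 : is_word t1 -> reduced t2 ->
  inversions (word_perm m (t1 ++ t2)) = (size t1 + size t2)%N -> reduced (t1 ++ t2).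
Proof.
move=> h1 /andP [h2 _] e; rewrite /reduced size_cat e eqxx andbT.
by move: h1 h2; rewrite /is_word all_cat => -> ->.
Qed.

Lemma reduced_word_exists (w : {perm 'I_m}) : exists2 t, reduced t & word_perm m t = w.
Proof.
case: (word_of_inversions (w := w) erefl) => t ht; exists (map (@letter m) t) => //.
by rewrite /reduced is_word_letters size_map size_tuple ht /=.
Qed.

Lemma reduced_cons a u : reduced (a :: u) -> reduced u /\ descent (word_perm m (a :: u)) a.
Proof.
case/andP=> /= /andP [ha hu] /eqP hs.
have hle := inversions_word_perm_le hu.
have := inversions_stp_mul_le (word_perm m u) ha; rewrite -word_perm_cons -hs /= => h1.
have e : size u = inversions (word_perm m u) by lia.
split=> [|x0 y0 hx hy]; first by rewrite /reduced hu e eqxx.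
case: (ltngtP (word_perm m (a :: u) x0) (word_perm m (a :: u) y0)) => // h.
- have := inversions_stp_mul_ascent ha hx hy h.
  by rewrite word_perm_cons mulgA stpK // mul1g -word_perm_cons -hs -e /=; lia.
- by move/val_inj/perm_inj: h => h; move: hx hy; rewrite h => -> /=; lia.
Qed.

End Words.

Section Matsumoto.
Variables (K : fieldType) (A : algType K) (m : nat) (s : nat -> A).
Local Open Scope ring_scope.
Hypothesis s_braid : forall i, (0 < i)%N -> (i.+1 < m)%N ->
  s i * s i.+1 * s i = s i.+1 * s i * s i.+1.
Hypothesis s_comm : forall i j, (0 < i < m)%N -> (0 < j < m)%N ->
  (i.+1 < j)%N || (j.+1 < i)%N -> s i * s j = s j * s i.

Definition prodw (t : seq nat) : A := \prod_(a <- t) s a.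

Lemma prodw_cons a t : prodw (a :: t) = s a * prodw t.
Proof. by rewrite /prodw big_cons. Qed.

(* The inductive step of Matsumoto's theorem: [IH] is the theorem for words of length [r]. *)
Section Exchange.
Variable r : nat.
Hypothesis IH : forall t1 t2, size t1 = r -> reduced m t1 -> reduced m t2 ->
  word_perm m t1 = word_perm m t2 -> prodw t1 = prodw t2.

Lemma prodw_exchange_far a b u1 u2 (w : {perm 'I_m}) :
  (0 < a)%N -> (a.+1 < b)%N -> (b < m)%N ->
  reduced m u1 -> reduced m u2 -> size u1 = r -> size u2 = r ->
  word_perm m u1 = (stp m a * w)%g -> word_perm m u2 = (stp m b * w)%g ->
  descent w b -> s a * prodw u1 = s b * prodw u2.
Proof.
move=> ha hab hbm red1 red2 hs1 hs2 wu1 wu2 db.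
have ha' : (0 < a < m)%N by lia.
have hb : (0 < b < m)%N by lia.
have r_a : inversions (stp m a * w)%g = r by rewrite -wu1 -reduced_size.
have r_b : inversions (stp m b * w)%g = r by rewrite -wu2 -reduced_size.
have r_ba := inversions_far_descent ha hab hbm db.
case: (reduced_word_exists (stp m b * (stp m a * w))%g) => ty redty wty.
have ty_size : size ty = r.-1 by rewrite (reduced_size redty) wty; lia.
have wa : (stp m a * word_perm m ty = stp m b * w)%g.
  rewrite wty !mulgA (stp_comm ha' hb) ?hab //.
  by rewrite -(mulgA _ (stp m a) (stp m a)) stpK // mulg1.
have -> : prodw u1 = prodw (b :: ty).
  apply: IH => //; last by rewrite word_perm_cons wty mulgA stpK // mul1g.
  apply: (reduced_cat (t1 := [:: b])) => //=; first by rewrite /is_word /=; lia.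
  by rewrite word_perm_cons wty mulgA stpK // mul1g r_a; lia.
have -> : prodw u2 = prodw (a :: ty).
  apply: IH => //; last by rewrite word_perm_cons wa.
  apply: (reduced_cat (t1 := [:: a])) => //=; first by rewrite /is_word /=; lia.
  by rewrite word_perm_cons wa r_b; lia.
by rewrite !prodw_cons !mulrA s_comm // hab.
Qed.

Lemma prodw_exchange_braid a u1 u2 (w : {perm 'I_m}) :
  (0 < a)%N -> (a.+1 < m)%N ->
  reduced m u1 -> reduced m u2 -> size u1 = r -> size u2 = r ->
  word_perm m u1 = (stp m a * w)%g -> word_perm m u2 = (stp m a.+1 * w)%g ->
  descent w a -> descent w a.+1 -> s a * prodw u1 = s a.+1 * prodw u2.
Proof.
move=> ha ham red1 red2 hs1 hs2 wu1 wu2 da db.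
have ha' : (0 < a < m)%N by lia.
have hb : (0 < a.+1 < m)%N by lia.
have r_a : inversions (stp m a * w)%g = r by rewrite -wu1 -reduced_size.
have r_b : inversions (stp m a.+1 * w)%g = r by rewrite -wu2 -reduced_size.
have r_aba := inversions_braid_descents ha ham da db.
case: (reduced_word_exists (stp m a * (stp m a.+1 * (stp m a * w)))%g) => ty redty wty.
have ty_size : size ty = (r - 2)%N by rewrite (reduced_size redty) wty; lia.
have wA : (stp m a.+1 * (stp m a * word_perm m ty) = stp m a * w)%g.
  by rewrite wty (mulgA (stp m a)) stpK // mul1g mulgA stpK // mul1g.
have wB : (stp m a * (stp m a.+1 * word_perm m ty) = stp m a.+1 * w)%g.
  rewrite wty !mulgA stp_braid //.
  rewrite -(mulgA _ (stp m a.+1) (stp m a.+1)) stpK // mulg1.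
  by rewrite -(mulgA _ (stp m a) (stp m a)) stpK // mulg1.
have -> : prodw u1 = prodw [:: a.+1, a & ty].
  apply: IH => //; last by rewrite !word_perm_cons wA.
  apply: (reduced_cat (t1 := [:: a.+1; a])) => //=; first by rewrite /is_word /=; lia.
  by rewrite !word_perm_cons wA r_a; lia.
have -> : prodw u2 = prodw [:: a, a.+1 & ty].
  apply: IH => //; last by rewrite !word_perm_cons wB.
  apply: (reduced_cat (t1 := [:: a; a.+1])) => //=; first by rewrite /is_word /=; lia.
  by rewrite !word_perm_cons wB r_b; lia.
by rewrite !prodw_cons !mulrA s_braid.
Qed.

Lemma prodw_exchange a b u1 u2 : (a < b)%N -> size u1 = r ->
  reduced m (a :: u1) -> reduced m (b :: u2) ->
  word_perm m (a :: u1) = word_perm m (b :: u2) -> s a * prodw u1 = s b * prodw u2.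
Proof.
move=> hab hs1 red1 red2 e.
have [redu1 da] := reduced_cons red1; have [redu2 db] := reduced_cons red2.
move: (red1) (red2) => /andP [/= /andP [ha _] _] /andP [/= /andP [hb _] _].
have hs2 : size u2 = r.
  by have := reduced_size red2; rewrite -e -(reduced_size red1) /=; lia.
have wu1 : word_perm m u1 = (stp m a * word_perm m (a :: u1))%g.
  by rewrite word_perm_cons mulgA stpK // mul1g.
have wu2 : word_perm m u2 = (stp m b * word_perm m (a :: u1))%g.
  by rewrite e word_perm_cons mulgA stpK // mul1g.
rewrite -e in db.
case: (ltnP a.+1 b) => far.
  by apply: (prodw_exchange_far (w := word_perm m (a :: u1))) => //; lia.
have eb : b = a.+1 by lia.
rewrite eb in wu2 db *.
by apply: (prodw_exchange_braid (w := word_perm m (a :: u1))) => //; lia.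
Qed.

End Exchange.

Theorem matsumoto t1 t2 : reduced m t1 -> reduced m t2 ->
  word_perm m t1 = word_perm m t2 -> prodw t1 = prodw t2.
Proof.
move: {2}(size t1) (erefl (size t1)) => r.
elim: r t1 t2 => [|r IH] [|a u1] t2 //= hs red1 red2 e.
- by have := reduced_size red2; rewrite -e /word_perm big_nil inversions1 => /size0nil ->.
- case: hs => hs; case: t2 red2 e => [|b u2] red2 e.
    by move: (reduced_size red1); rewrite e /word_perm big_nil inversions1.
  rewrite !prodw_cons; case: (ltngtP a b) => hab.
  + exact: (prodw_exchange IH).
  + apply/esym/(prodw_exchange IH) => //.
    by have := reduced_size red1; rewrite e -(reduced_size red2) /=; lia.
  + subst b; have [redu1 _] := reduced_cons red1; have [redu2 _] := reduced_cons red2.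
    congr (_ * _); apply: IH => //; move: (red1) => /andP [/= /andP [ha _] _].
    move: e; rewrite !word_perm_cons => /(congr1 (fun g => stp m a * g)%g).
    by rewrite !mulgA stpK // !mul1g.
Qed.

Lemma sigw_prodw (w : {perm 'I_m}) t : reduced m t -> word_perm m t = w -> sigw s w = prodw t.
Proof.
move=> red wt; rewrite /sigw; case: pickP => [t' /eqP ht' | none].
  rewrite -(big_map (@letter m) xpredT s) -/(prodw _); apply: matsumoto; rewrite ?ht' ?wt //.
  by rewrite /reduced is_word_letters size_map size_tuple ht' ell_inversions eqxx.
case: (word_of_inversions (w := w) erefl) => t0 ht0.
by move: none; rewrite ell_inversions => /(_ t0); rewrite ht0 eqxx.
Qed.

Lemma sigw_mul (u v : {perm 'I_m}) : inversions (u * v)%g = (inversions u + inversions v)%N ->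
  sigw s (u * v)%g = sigw s u * sigw s v.
Proof.
move=> h; case: (reduced_word_exists u) => tu redu wu; case: (reduced_word_exists v) => tv redv wv.
rewrite (sigw_prodw redu wu) (sigw_prodw redv wv) (@sigw_prodw _ (tu ++ tv)).
- by rewrite /prodw big_cat.
- apply: reduced_cat => //; first by case/andP: redu.
  by rewrite word_perm_cat (reduced_size redu) (reduced_size redv) wu wv h.
- by rewrite word_perm_cat wu wv.
Qed.

Lemma sigw_stp c : (0 < c < m)%N -> sigw s (stp m c) = s c.
Proof.
move=> hc; rewrite (@sigw_prodw _ [:: c]) ?prodw_cons /prodw ?big_nil ?mulr1 //.
  by rewrite /reduced /= hc word_perm_cons /word_perm big_nil mulg1 inversions_stp.
by rewrite word_perm_cons /word_perm big_nil mulg1.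
Qed.

End Matsumoto.

Lemma blkE k i z j : (0 < i)%N -> (i.-1 * k = z)%N ->
  blk k i j = if ((z <= j) && (j < z + k))%N then (j + k)%N
              else if ((z + k <= j) && (j < z + k + k))%N then (j - k)%N else j.
Proof.
case: i => // i _ /= hz; rewrite /blk /= hz !mulSn -hz.
by rewrite (addnC k) addnA (addnC k).
Qed.

Lemma wblkE m k i (x : 'I_m) : (0 < i)%N -> (i.+1 * k <= m)%N ->
  val (wblk m k i x) = blk k i x.
Proof.
move=> hi hm; rewrite /wblk permE /wfun hi hm /= val_insubd.
have := ltn_ord x; case: i hi hm => // i _ hm hx.
by rewrite (@blkE _ i.+1 (i * k)) //=; case_ifs_lia.
Qed.

Section Blocks.
Variables m k : nat.
Local Notation W i := (wblk m k i).

Lemma mulSpredn i : (0 < i)%N -> (i * k = i.-1 * k + k)%N.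
Proof. by case: i => // i _; rewrite mulSn addnC. Qed.

Lemma wblk_braid i : (0 < i)%N -> (i.+2 * k <= m)%N ->
  (W i * W i.+1 * W i = W i.+1 * W i * W i.+1)%g.
Proof.
move=> hi hm; have hm1 : (i.+1 * k <= m)%N by apply: leq_trans hm; rewrite leq_mul2r ltnW ?orbT.
apply/permP => x; apply/val_inj; rewrite !permM !wblkE //.
have hz : (i.+1.-1 * k = i.-1 * k + k)%N by rewrite /= mulSpredn.
rewrite !(@blkE k i.+1 (i.-1 * k + k)) // !(@blkE k i (i.-1 * k)) //.
have := ltn_ord x; move: hm; rewrite !mulSn mulSpredn //.
set z := (i.-1 * k)%N; move=> hm hx; case_ifs_lia.
Qed.

Lemma inversions_wblk_braid i : (0 < i)%N -> (i.+2 * k <= m)%N ->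
  [/\ inversions (W i * W i.+1)%g = (inversions (W i) + inversions (W i.+1))%N,
      inversions (W i * W i.+1 * W i)%g = (inversions (W i * W i.+1)%g + inversions (W i))%N,
      inversions (W i.+1 * W i)%g = (inversions (W i.+1) + inversions (W i))%N &
      inversions (W i.+1 * W i * W i.+1)%g = (inversions (W i.+1 * W i)%g + inversions (W i.+1))%N].
Proof.
move=> hi hm; have hm1 : (i.+1 * k <= m)%N by apply: leq_trans hm; rewrite leq_mul2r ltnW ?orbT.
have hz : (i.+1.-1 * k = i.-1 * k + k)%N by rewrite /= mulSpredn.
have := hm; rewrite !mulSn mulSpredn //; set z := (i.-1 * k)%N => hm'.
split; apply: inversions_mul => x y hxy; rewrite ?permM !wblkE //;
  rewrite !(@blkE k i.+1 (z + k)) ?(@blkE k i z) //;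
  have := ltn_ord x; have := ltn_ord y; case_ifs_lia.
Qed.

Lemma far_blocks i j : (0 < i)%N -> (0 < j)%N -> (i.+1 < j)%N || (j.+1 < i)%N ->
  (i.-1 * k + k + k <= j.-1 * k)%N || (j.-1 * k + k + k <= i.-1 * k)%N.
Proof.
move=> hi hj /orP [h|h]; apply/orP; [left|right].
  by have := @leq_mul i.-1.+2 k j.-1 k ltac:(lia) (leqnn k); rewrite !mulSn; lia.
by have := @leq_mul j.-1.+2 k i.-1 k ltac:(lia) (leqnn k); rewrite !mulSn; lia.
Qed.

Lemma wblk_far i j : (0 < i)%N -> (0 < j)%N -> (i.+1 * k <= m)%N -> (j.+1 * k <= m)%N ->
  (i.+1 < j)%N || (j.+1 < i)%N ->
  (W i * W j = W j * W i)%g /\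
  inversions (W i * W j)%g = (inversions (W i) + inversions (W j))%N.
Proof.
move=> hi hj hmi hmj far; have fz := far_blocks hi hj far.
have := hmj; have := hmi; rewrite !mulSn !(mulSpredn hi) !(mulSpredn hj).
set zi := (i.-1 * k)%N; set zj := (j.-1 * k)%N => hmi' hmj'.
split.
  apply/permP => x; apply/val_inj; rewrite !permM !wblkE //.
  rewrite !(@blkE k i zi) // !(@blkE k j zj) //.
  by have := ltn_ord x; case_ifs_lia.
apply: inversions_mul => x y hxy; rewrite !wblkE //.
rewrite !(@blkE k i zi) // !(@blkE k j zj) //.
by have := ltn_ord x; have := ltn_ord y; case_ifs_lia.
Qed.

Definition block_swap (i b : nat) : nat :=
  if b == i.-1 then i else if b == i then i.-1 else b.

Lemma block_swap_far i b : (0 < i)%N -> b != i.-1 -> b != i ->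
  (b * k + k <= i.-1 * k)%N || (i.-1 * k + k + k <= b * k)%N.
Proof.
move=> hi n1 n2; case: (ltnP b i.-1) => h; apply/orP; [left|right].
  by have := @leq_mul b.+1 k i.-1 k h (leqnn k); rewrite !mulSn; lia.
by have := @leq_mul i.-1.+2 k b k ltac:(lia) (leqnn k); rewrite !mulSn; lia.
Qed.

Lemma wblk_stp_conj i b a : (0 < i)%N -> (i.+1 * k <= m)%N -> (b.+1 * k <= m)%N ->
  (0 < a < k)%N ->
  (W i * stp m (b * k + a) = stp m (block_swap i b * k + a) * W i)%g /\
  inversions (W i * stp m (b * k + a))%g = (inversions (W i) + inversions (stp m (b * k + a)))%N.
Proof.
move=> hi hm hb ha.
have hmz : (i.-1 * k + k + k <= m)%N by move: hm; rewrite mulSn mulSpredn // addnC.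
have hbk : (b * k + k <= m)%N by move: hb; rewrite mulSn addnC.
rewrite /block_swap; case: eqVneq => [eb|n1]; last case: eqVneq => [eb|n2];
  [ rewrite eb in hbk *; rewrite (mulSpredn hi) | rewrite eb (mulSpredn hi) in hbk *
  | have := block_swap_far hi n1 n2 ];
  set z := (i.-1 * k)%N; (split; [
    apply/permP => x; apply/val_inj; rewrite !permM !wblkE // !stpE ?wblkE //; try lia;
    rewrite !(@blkE _ _ z) //; have := ltn_ord x; case_ifs_lia
  | apply: inversions_mul => x y hxy; rewrite !stpE ?wblkE //; try lia;
    rewrite !(@blkE _ _ z) //; have := ltn_ord x; have := ltn_ord y; case_ifs_lia]).
Qed.

End Blocks.

Section Conjugation.
Variables (K : fieldType) (A : algType K).
Local Open Scope ring_scope.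

Lemma sigw_conj k (s1 s2 : nat -> A) (X : A) (w : {perm 'I_k}) :
  (forall a, (0 < a < k)%N -> X * s1 a = s2 a * X) -> X * sigw s1 w = sigw s2 w * X.
Proof.
move=> h; rewrite /sigw; case: pickP => [t _|_]; last by rewrite mul0r mulr0.
elim: (tval t) => [|i t' IH]; first by rewrite !big_nil mulr1 mul1r.
rewrite !big_cons mulrA h; last by rewrite /letter; have := ltn_ord i; lia.
by rewrite -mulrA IH mulrA.
Qed.

Lemma qsym_conj (q : K) k (s1 s2 : nat -> A) (X : A) :
  (forall a, (0 < a < k)%N -> X * s1 a = s2 a * X) -> X * qsym q s1 k = qsym q s2 k * X.
Proof.
move=> h; rewrite /qsym -scalerAr -scalerAl mulr_sumr mulr_suml; congr (_ *: _).
by apply: eq_bigr => w _; rewrite -scalerAr -scalerAl (sigw_conj _ h).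
Qed.

Lemma big_prod_conj (r : seq nat) (F G : nat -> A) (X : A) :
  (forall b, b \in r -> X * F b = G b * X) ->
  X * \prod_(b <- r) F b = (\prod_(b <- r) G b) * X.
Proof.
elim: r => [|b r IH] h; first by rewrite !big_nil mulr1 mul1r.
rewrite !big_cons mulrA h ?mem_head // -mulrA IH ?mulrA // => c hc.
by apply: h; rewrite in_cons hc orbT.
Qed.

Lemma prod_block_swap n i (F : nat -> A) : (0 < i)%N -> (i < n)%N ->
  F i.-1 * F i = F i * F i.-1 ->
  \prod_(0 <= b < n) F (block_swap i b) = \prod_(0 <= b < n) F b.
Proof.
move=> hi hin hc.
have split_at (G : nat -> A) : \prod_(0 <= b < n) G b =
    (\prod_(0 <= b < i.-1) G b) * (G i.-1 * G i) * \prod_(i.+1 <= b < n) G b.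
  rewrite (@big_cat_nat _ _ _ i.-1 0 n) /=; try lia.
  rewrite (@big_cat_nat _ _ _ i.+1 i.-1 n) /=; try lia.
  case: i hi {hin hc} => // j _ /=.
  by rewrite big_nat_recl // big_nat1 !mulrA.
have swap_id b : b != i.-1 -> b != i -> block_swap i b = b.
  by rewrite /block_swap => /negbTE -> /negbTE ->.
rewrite !split_at; congr (_ * _ * _).
- by apply: eq_big_nat => b hb; rewrite swap_id //; apply/eqP; lia.
- by rewrite /block_swap eqxx; case: eqP; [lia|]; rewrite eqxx hc.
- by apply: eq_big_nat => b hb; rewrite swap_id //; apply/eqP; lia.
Qed.

Lemma commr_mul2 (T1 T2 Q : A) : T2 * Q = Q * T2 ->
  T1 * Q * (T2 * Q) = T1 * T2 * (Q * Q).
Proof. by move=> h2; rewrite !mulrA -(mulrA T1) -h2 !mulrA. Qed.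

Lemma commr_mul3 (T1 T2 T3 Q : A) : T2 * Q = Q * T2 -> T3 * Q = Q * T3 ->
  T1 * Q * (T2 * Q) * (T3 * Q) = T1 * T2 * T3 * (Q * Q * Q).
Proof.
move=> h2 h3; have pull X Y : Y * Q = Q * Y -> X * Q * Y = X * Y * Q.
  by move=> h; rewrite -mulrA -h mulrA.
by rewrite !mulrA (pull _ _ h2) (pull _ _ h3) (pull _ _ h3).
Qed.

End Conjugation.

Section FusedBraid.
Variables (K : fieldType) (q : K) (A : algType K) (s : nat -> A) (k n : nat).
Local Open Scope ring_scope.
Hypothesis s_braid : forall i, (0 < i)%N -> (i.+1 < k * n)%N ->
  s i * s i.+1 * s i = s i.+1 * s i * s i.+1.
Hypothesis s_comm : forall i j, (0 < i < k * n)%N -> (0 < j < k * n)%N ->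
  (i.+1 < j)%N || (j.+1 < i)%N -> s i * s j = s j * s i.

Local Notation T i := (sigw s (wblk (k * n) k i)).
Local Notation P := (Pkn q s k n).

Lemma block_le b : (b < n)%N -> (b.+1 * k <= k * n)%N.
Proof. by move=> hb; rewrite mulnC leq_mul2l hb orbT. Qed.

Lemma sigw_wblk_conj i b a : (0 < i)%N -> (i < n)%N -> (b < n)%N -> (0 < a < k)%N ->
  T i * s (b * k + a) = s (block_swap i b * k + a) * T i.
Proof.
move=> hi hin hb ha.
have [E I] := wblk_stp_conj hi (block_le hin) (block_le hb) ha.
have hsw : (block_swap i b < n)%N by rewrite /block_swap; case: ifP; [lia|]; case: ifP; lia.
have hc : (0 < b * k + a < k * n)%N by have := block_le hb; rewrite mulSn; lia.
have hc' : (0 < block_swap i b * k + a < k * n)%N by have := block_le hsw; rewrite mulSn; lia.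
rewrite -(sigw_stp s_braid s_comm hc) -(sigw_stp s_braid s_comm hc') -!(sigw_mul s_braid s_comm) //.
  by rewrite E.
by rewrite -E I !inversions_stp // addnC.
Qed.

Lemma sigw_wblk_Pkn i : (0 < i)%N -> (i < n)%N -> T i * P = P * T i.
Proof.
move=> hi hin; set F := fun b => qsym q (fun a => s (b * k + a)) k.
rewrite /Pkn -(big_mkord xpredT F) (@big_prod_conj _ _ _ _ (F \o block_swap i)).
  congr (_ * _); apply: prod_block_swap => //.
  apply: qsym_conj => a ha; apply: esym; apply: qsym_conj => a' ha'.
  have := block_le hin; rewrite mulSn (mulSpredn k hi); set z := (i.-1 * k)%N => hz.
  by apply: s_comm; lia.
move=> b; rewrite mem_iota add0n => /andP [_ hb].
by apply: qsym_conj => a ha; apply: sigw_wblk_conj => //; lia.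
Qed.

Lemma sigw_wblk_braid i : (0 < i)%N -> (i.+1 < n)%N ->
  T i * T i.+1 * T i = T i.+1 * T i * T i.+1.
Proof.
move=> hi hin; have [h1 h2 h3 h4] := inversions_wblk_braid hi (block_le hin).
by rewrite -!(sigw_mul s_braid s_comm) // wblk_braid // block_le.
Qed.

Lemma sigw_wblk_far i j : (0 < i)%N -> (0 < j)%N -> (i < n)%N -> (j < n)%N ->
  (i.+1 < j)%N || (j.+1 < i)%N -> T i * T j = T j * T i.
Proof.
move=> hi hj hin hjn far; have [E I] := wblk_far hi hj (block_le hin) (block_le hjn) far.
have I' : inversions (wblk (k * n) k j * wblk (k * n) k i)%g =
    (inversions (wblk (k * n) k j) + inversions (wblk (k * n) k i))%N by rewrite -E I addnC.
by rewrite -(sigw_mul s_braid s_comm I) -(sigw_mul s_braid s_comm I') E.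
Qed.

End FusedBraid.

Theorem mainTheorem8 (R : realType) (A : algType (Cq R)) (s : nat -> A)
    (k n : nat) :
  (1 <= k)%N -> (2 <= n)%N -> hecke_rel (qq R) (k * n) s ->
  let P := Pkn (qq R) s k n in
  let Sig := fun i => (P * sigw s (wblk (k * n) k i) * P)%R in
  [/\ (forall i, (1 <= i <= n.-1)%N ->
         (sigw s (wblk (k * n) k i) * P = P * sigw s (wblk (k * n) k i))%R),
      (forall i, (1 <= i)%N -> (i <= n - 2)%N ->
         (Sig i * Sig i.+1 * Sig i = Sig i.+1 * Sig i * Sig i.+1)%R)
    & (forall i j, (1 <= i <= n.-1)%N -> (1 <= j <= n.-1)%N ->
         (i.+1 < j)%N || (j.+1 < i)%N ->
         (Sig i * Sig j = Sig j * Sig i)%R)].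
Proof.
move=> _ hn [s_braid s_comm _] P Sig.
have {}s_braid i : (0 < i)%N -> (i.+1 < k * n)%N -> (s i * s i.+1 * s i = s i.+1 * s i * s i.+1)%R.
  by move=> h1 h2; apply: s_braid; lia.
have {}s_comm i j : (0 < i < k * n)%N -> (0 < j < k * n)%N -> (i.+1 < j)%N || (j.+1 < i)%N ->
    (s i * s j = s j * s i)%R.
  by move=> h1 h2; apply: s_comm; lia.
pose T i := sigw s (wblk (k * n) k i).
have TP i : (0 < i)%N -> (i < n)%N -> (T i * P = P * T i)%R :=
  sigw_wblk_Pkn (qq R) s_braid s_comm (i := i).
have TPP i : (0 < i)%N -> (i < n)%N -> (T i * (P * P) = (P * P) * T i)%R.
  by move=> hi hin; rewrite mulrA TP // -!mulrA TP.
have SigE i : (0 < i)%N -> (i < n)%N -> Sig i = (T i * (P * P))%R.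
  by move=> hi hin; rewrite /Sig -/(T i) -TP // mulrA.
split=> [i hi | i hi hin | i j /andP [hi hin] /andP [hj hjn] far].
- by apply: TP; lia.
- rewrite !SigE; try lia.
  rewrite (commr_mul3 _ (TPP i.+1 _ _) (TPP i _ _)); try lia.
  rewrite (commr_mul3 _ (TPP i _ _) (TPP i.+1 _ _)); try lia.
  by rewrite sigw_wblk_braid //; lia.
- rewrite !SigE; try lia.
  rewrite (commr_mul2 _ (TPP j _ _)) ?(commr_mul2 _ (TPP i _ _)); try lia.
  by rewrite sigw_wblk_far //; lia.
Qed.
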